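(* Let $L:\mathbb{R}^d\to\mathbb{R}^{\mathcal{Y}}_+$ be a polyhedral loss which indirectly elicits a finite property $\gamma:\Delta_{\mathcal{Y}}\rightrightarrows\mathcal{R}$. Then for any loss $\ell:\mathcal{R}\to\mathbb{R}^{\mathcal{Y}}_+$ eliciting $\gamma$, there exists a link $\psi:\mathbb{R}^d\to\mathcal{R}$ such that $(L,\psi)$ is calibrated with respect to $\ell$.
   Context: $\mathcal{Y}$ is a finite label set, $\Delta_{\mathcal{Y}}$ the probability simplex, $\mathbb{R}^{\mathcal{Y}}_+$ the nonnegative orthant. A property is a map $\Gamma:\Delta_{\mathcal{Y}}\rightrightarrows\mathcal{R}$ assigning to each $p$ a nonempty subset of $\mathcal{R}$; it is finite if $\mathcal{R}$ is finite; its level sets are $\Gamma_r=\{p:r\in\Gamma(p)\}$. A loss $L:\mathcal{R}\to\mathbb{R}^{\mathcal{Y}}_+$ elicits $\Gamma$ if $\Gamma(p)=\arg\min_{r\in\mathcal{R}}\langle p,L(r)\rangle$ for all $p$ (requiring the minimum to be attained); write $\mathrm{prop}[L]$ for this property. $L:\mathbb{R}^d\to\mathbb{R}^{\mathcal{Y}}_+$ is polyhedral if each coordinate is a pointwise maximum of finitely many affine functions (polyhedral losses elicit a property). A loss $L$ eliciting $\Gamma$ indirectly elicits $\gamma:\Delta_{\mathcal{Y}}\rightrightarrows\mathcal{R}$ if for every $u$ there is $r\in\mathcal{R}$ with $\Gamma_u\subseteq\gamma_r$. $(L,\psi)$ is calibrated with respect to $\ell$ if for all $p$, $\inf_{u:\psi(u)\notin\mathrm{prop}[\ell](p)}\langle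 p,L(u)\rangle>\inf_{u}\langle p,L(u)\rangle$ (infimum over the empty set is $+\infty$). *)

From HB Require Import structures.
From mathcomp Require Import all_boot all_order all_algebra.
From mathcomp Require Import all_classical all_reals ereal.
Set Implicit Arguments. Unset Strict Implicit. Unset Printing Implicit Defensive.
Import Order.TTheory GRing.Theory Num.Theory.
Local Open Scope ring_scope.
Local Open Scope classical_set_scope.

Section Defs.
Variable R : realType.
Variable Y : finType.

Definition simplex (p : Y -> R) : Prop :=
  (forall y, 0 <= p y) /\ \sum_(y : Y) p y = 1.

Definition expect (p : Y -> R) (v : Y -> R) : R := \sum_(y : Y) p y * v y.

Definition is_property (Rep : Type) (G : (Y -> R) -> Rep -> Prop) : Prop :=
  forall p, simplex p -> exists r, G p r.

Definition nonneg_loss (Rep : Type) (L : Rep -> Y -> R) : Prop :=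
  forall r y, 0 <= L r y.

Definition prop (Rep : Type) (L : Rep -> Y -> R) (p : Y -> R) (r : Rep) : Prop :=
  forall r', expect p (L r) <= expect p (L r').

(* L elicits G: G(p) = argmin (and G is a property, so the minimum is attained) *)
Definition elicits (Rep : Type) (L : Rep -> Y -> R) (G : (Y -> R) -> Rep -> Prop) : Prop :=
  is_property G /\ forall p, simplex p -> forall r, G p r <-> prop L p r.

Definition affine_eval (d : nat) (a : 'rV[R]_d) (b : R) (u : 'rV[R]_d) : R :=
  \sum_(i < d) a 0 i * u 0 i + b.

Definition polyhedral (d : nat) (L : 'rV[R]_d -> Y -> R) : Prop :=
  forall y, exists (n : nat) (a : 'I_n.+1 -> 'rV[R]_d) (b : 'I_n.+1 -> R),
    forall u, L u y = \big[Num.max/affine_eval (a ord0) (b ord0) u]_(i < n.+1)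
                        affine_eval (a i) (b i) u.

Definition indirectly_elicits (Rep : Type) (d : nat) (L : 'rV[R]_d -> Y -> R)
    (gamma : (Y -> R) -> Rep -> Prop) : Prop :=
  elicits L (prop L) /\
  forall u, exists r, forall p, simplex p -> prop L p u -> gamma p r.

(* (L, psi) calibrated w.r.t. ell, with infima in the extended reals
   (so that the infimum over the empty set is +oo) *)
Definition calibrated (Rep : Type) (d : nat) (L : 'rV[R]_d -> Y -> R)
    (psi : 'rV[R]_d -> Rep) (ell : Rep -> Y -> R) : Prop :=
  forall p, simplex p ->
    (ereal_inf [set (expect p (L u))%:E | u in setT]
      < ereal_inf [set (expect p (L u))%:E | u in [set u | ~ prop ell p (psi u)]])%E.

End Defs.

(* Each coordinate of the polyhedral loss L is a maximum of finitely many affine pieces; call a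
   piece eps-active at u when it is within eps of that maximum.  By Fourier-Motzkin elimination, a
   finite system of affine inequalities that is eps-feasible for every eps > 0 is feasible.  Applied
   to the finitely many possible active patterns this gives e0 > 0 such that for every u some v has
   all e0-active pieces of u exactly active; the link sends u to a report r with Gamma_v contained
   in gamma_r.  For a fixed p, optimality is inherited by any point whose active set is larger (by
   convexity, since the one-sided directional derivatives can only grow), and the same closedness
   argument shows that every u within some delta > 0 of the optimal expected loss has such a v
   optimal.  Hence surrogate reports linked to non-optimal ell-reports are at least delta above
   the infimum. *)

From mathcomp Require Import all_boot all_order all_algebra.
From mathcomp Require Import all_classical all_reals ereal topology.
From mathcomp Require Import lra.
Set Implicit Arguments. Unset Strict Implicit. Unset Printing Implicit Defensive.
Import Order.TTheory GRing.Theory Num.Theory.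
Local Open Scope ring_scope.
Local Open Scope classical_set_scope.

Lemma exists_between (disp : Order.disp_t) (T : orderType disp) (x0 : T)
    (I : finType) (P Q : pred I) (f : I -> T) :
  (forall i j, P i -> Q j -> (f i <= f j)%O) ->
  exists x, (forall i, P i -> (f i <= x)%O) /\ (forall j, Q j -> (x <= f j)%O).
Proof.
move=> PQ; pose lo := \big[Order.min/x0]_(j | Q j) f j.
exists (\big[Order.max/lo]_(i | P i) f i).
split=> [i Pi|j Qj]; first exact: le_bigmax_cond.
by apply: bigmax_le => [|i Pi]; [exact: bigmin_le_cond | exact: PQ].
Qed.

Lemma bigmax_attained (disp : Order.disp_t) (T : orderType disp) (I : finType) (i0 : I)
    (F : I -> T) :
  exists i, \big[Order.max/F i0]_j F j = F i.
Proof.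
elim/big_ind: _ => [|x y [i ->] [j ->]|i _]; [by exists i0 | | by exists i].
by rewrite maxEle; case: ifP; eexists.
Qed.

Definition dot (R : realType) (d : nat) (a u : 'rV[R]_d) : R := \sum_(i < d) a 0 i * u 0 i.

Section Dot.
Variables (R : realType) (d : nat).
Implicit Types (a c u v : 'rV[R]_d) (t : R).

Lemma dot0l u : dot 0 u = 0.
Proof. by rewrite /dot big1 // => i _; rewrite mxE mul0r. Qed.

Lemma dotDl a c u : dot (a + c) u = dot a u + dot c u.
Proof. by rewrite /dot -big_split; apply: eq_bigr => i _; rewrite mxE mulrDl. Qed.

Lemma dotZl t a u : dot (t *: a) u = t * dot a u.
Proof. by rewrite /dot mulr_sumr; apply: eq_bigr => i _; rewrite mxE mulrA. Qed.

Lemma dotBl a c u : dot (a - c) u = dot a u - dot c u.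
Proof. by rewrite dotDl -scaleN1r dotZl mulN1r. Qed.

Lemma dot_suml (I : finType) (F : I -> 'rV[R]_d) u :
  dot (\sum_i F i) u = \sum_i dot (F i) u.
Proof. by rewrite /dot exchange_big; apply: eq_bigr => j _; rewrite summxE mulr_suml. Qed.

Lemma dotDr a u v : dot a (u + v) = dot a u + dot a v.
Proof. by rewrite /dot -big_split; apply: eq_bigr => i _; rewrite mxE mulrDr. Qed.

Lemma dotZr t a u : dot a (t *: u) = t * dot a u.
Proof. by rewrite /dot mulr_sumr; apply: eq_bigr => i _; rewrite mxE mulrCA. Qed.

Lemma dotBr a u v : dot a (u - v) = dot a u - dot a v.
Proof. by rewrite dotDr -scaleN1r dotZr mulN1r. Qed.

Lemma dot_hsubmx m (a u : 'rV[R]_(m + d)) :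
  dot a u = dot (lsubmx a) (lsubmx u) + dot (rsubmx a) (rsubmx u).
Proof. by rewrite /dot big_split_ord; congr (_ + _); apply: eq_bigr => i _; rewrite !mxE. Qed.

Lemma dot1 (a u : 'rV[R]_1) : dot a u = a 0 0 * u 0 0.
Proof. by rewrite /dot big_ord1. Qed.

End Dot.

Section Affine.
Variables (R : realType) (d : nat).

Definition affine (g : 'rV[R]_d -> R) := exists c e, forall u, g u = dot c u + e.

Lemma affine_dot c e : affine (fun u => dot c u + e).
Proof. by exists c, e. Qed.

Lemma affine_cst e : affine (fun=> e).
Proof. by exists 0, e => u; rewrite dot0l add0r. Qed.

Lemma affineD f g : affine f -> affine g -> affine (fun u => f u + g u).
Proof.
move=> [c [e fE]] [c' [e' gE]]; exists (c + c'), (e + e') => u.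
by rewrite fE gE dotDl addrACA.
Qed.

Lemma affineB f g : affine f -> affine g -> affine (fun u => f u - g u).
Proof.
move=> [c [e fE]] [c' [e' gE]]; exists (c - c'), (e - e') => u.
by rewrite fE gE dotBl opprD addrACA.
Qed.

Lemma affineZ t f : affine f -> affine (fun u => t * f u).
Proof. by move=> [c [e fE]]; exists (t *: c), (t * e) => u; rewrite fE dotZl mulrDr. Qed.

Lemma affine_sum (I : finType) (f : I -> 'rV[R]_d -> R) :
  (forall i, affine (f i)) -> affine (fun u => \sum_i f i u).
Proof.
move=> /fin_all_exists[c /fin_all_exists[e fE]].
exists (\sum_i c i), (\sum_i e i) => u.
by rewrite dot_suml -big_split; apply: eq_bigr => i _; exact: fE.
Qed.

End Affine.

Section FourierMotzkin.
Variables (R : realType) (d : nat) (K : finType).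
Variables (c : K -> 'rV[R]_(1 + d)) (e : K -> R).

Let h k := lsubmx (c k) 0 0.
Let t k := rsubmx (c k).

(* Opposite-sign pairs are combined with weights summing to one, so relaxing every constraint
   by eps relaxes every eliminated constraint by eps as well. *)
Definition fm_row (kj : K + K * K) : 'rV[R]_d :=
  match kj with
  | inl k => if h k == 0 then t k else 0
  | inr (k, j) => if (0 < h k) && (h j < 0)
                  then (h k - h j)^-1 *: (- h j *: t k + h k *: t j) else 0
  end.

Definition fm_rhs (kj : K + K * K) : R :=
  match kj with
  | inl k => if h k == 0 then e k else 0
  | inr (k, j) => if (0 < h k) && (h j < 0)
                  then (h k - h j)^-1 * (- h j * e k + h k * e j) else 0
  end.

Lemma dot_first (k : K) u : dot (c k) u = h k * lsubmx u 0 0 + dot (t k) (rsubmx u).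
Proof. by rewrite dot_hsubmx dot1. Qed.

Lemma fm_sound eps u : 0 <= eps -> (forall k, dot (c k) u <= e k + eps) ->
  forall kj, dot (fm_row kj) (rsubmx u) <= fm_rhs kj + eps.
Proof.
move=> eps_ge0 uP [k|[k j]] /=.
  case: eqP => [hk0|_]; last by rewrite dot0l add0r.
  by have := uP k; rewrite dot_first hk0 mul0r add0r.
case: ifP => [/andP[hk_gt0 hj_lt0]|_]; last by rewrite dot0l add0r.
have s_gt0 : 0 < h k - h j by rewrite subr_gt0 (lt_trans hj_lt0).
rewrite dotZl dotDl !dotZl -[eps](mulKf (lt0r_neq0 s_gt0)) -mulrDr ler_pM2l ?invr_gt0 //.
have := uP k; have := uP j; rewrite !dot_first; nra.
Qed.

Lemma fm_complete u' : (forall kj, dot (fm_row kj) u' <= fm_rhs kj) ->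
  exists x, forall k, dot (c k) (row_mx x%:M u') <= e k.
Proof.
move=> u'P; pose bound k := (e k - dot (t k) u') / h k.
have [|x [xlo xhi]] := @exists_between _ _ 0 _ (fun j => h j < 0) (fun k => 0 < h k) bound.
  move=> j k /= hj_lt0 hk_gt0; have := u'P (inr (k, j)); rewrite /= hk_gt0 hj_lt0 /=.
  have s_gt0 : 0 < h k - h j by rewrite subr_gt0 (lt_trans hj_lt0).
  rewrite dotZl dotDl !dotZl ler_pM2l ?invr_gt0 // => comb.
  rewrite /bound ler_ndivrMr // mulrAC ler_pdivrMr //; nra.
exists x => k; rewrite dot_first row_mxKl row_mxKr mxE eqxx mulr1n.
have [hk_lt0|hk_gt0|hk0] := ltgtP (h k) 0.
- by have := xlo k hk_lt0; rewrite /bound ler_ndivrMr // => ?; lra.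
- by have := xhi k hk_gt0; rewrite /bound ler_pdivlMr // => ?; lra.
- by have := u'P (inl k); rewrite /= hk0 eqxx mul0r add0r.
Qed.

End FourierMotzkin.

Lemma approx_feasible_feasible (R : realType) (d : nat) (K : finType)
    (c : K -> 'rV[R]_d) (e : K -> R) :
  (forall eps, 0 < eps -> exists u, forall k, dot (c k) u <= e k + eps) ->
  exists u, forall k, dot (c k) u <= e k.
Proof.
elim: d K c e => [|d IHd] K c e feas.
  exists 0 => k; apply/ler_addgt0Pr => eps /feas[u /(_ k)].
  by rewrite /dot !big_ord0.
have [|u' /fm_complete[x xP]] := IHd _ (fm_row c) (fm_rhs c e).
  move=> eps /[dup] eps_gt0 /feas[u uP]; exists (rsubmx (u : 'rV_(1 + d))).
  exact: fm_sound (ltW eps_gt0) uP.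
by exists (row_mx x%:M u').
Qed.

Section AffineSystem.
Variables (R : realType) (d : nat).
Implicit Types (P Q : R -> 'rV[R]_d -> Prop).

(* Only relaxations [0 <= eps] are described, so a constraint can be disabled by replacing it
   with the function 0. *)
Definition affine_system P := exists (K : finType) (g : K -> 'rV[R]_d -> R),
  (forall k, affine (g k)) /\ forall eps u, 0 <= eps -> P eps u <-> forall k, g k u <= eps.

Lemma affine_system_closed P : affine_system P ->
  (forall eps, 0 < eps -> exists u, P eps u) -> exists u, P 0 u.
Proof.
move=> [K [g [/fin_all_exists[c /fin_all_exists[e gE]] PE]]] feas.
have [|u uP] := @approx_feasible_feasible _ _ _ c (fun k => - e k).
  move=> eps /[dup] eps_gt0 /feas[u /PE uP]; exists u => k.
  by have := uP (ltW eps_gt0) k; rewrite gE; lra.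
by exists u; apply/PE => // k; have := uP k; rewrite gE; lra.
Qed.

Lemma affine_system_ext P Q : (forall eps u, 0 <= eps -> P eps u <-> Q eps u) ->
  affine_system P -> affine_system Q.
Proof.
move=> PQ [K [g [ga PE]]]; exists K, g; split=> // eps u eps_ge0.
by rewrite -PE //; split => /PQ; apply.
Qed.

Lemma affine_system_forall (I : finType) (g : I -> 'rV[R]_d -> R) :
  (forall i, affine (g i)) -> affine_system (fun eps u => forall i, g i u <= eps).
Proof. by move=> ga; exists I, g. Qed.

Lemma affine_system_forall_cond (I : finType) (C : pred I) (g : I -> 'rV[R]_d -> R) :
  (forall i, affine (g i)) -> affine_system (fun eps u => forall i, C i -> g i u <= eps).
Proof.
move=> ga; exists I, (fun i => if C i then g i else fun=> 0); split.
  by move=> i; case: (C i); [exact: ga | exact: affine_cst].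
move=> eps u eps_ge0; split=> [gP i|gP i Ci]; last by have := gP i; rewrite Ci.
by case: ifP => // /gP.
Qed.

Lemma affine_system_le (g : 'rV[R]_d -> R) :
  affine g -> affine_system (fun eps u => g u <= eps).
Proof.
move=> ga; apply: affine_system_ext (affine_system_forall (fun _ : unit => ga)).
by move=> eps u _; split => [/(_ tt)|].
Qed.

Lemma affine_system_and P Q : affine_system P -> affine_system Q ->
  affine_system (fun eps u => P eps u /\ Q eps u).
Proof.
move=> [K [g [ga PE]]] [K' [g' [ga' QE]]].
exists (K + K')%type, (fun k => match k with inl k => g k | inr k => g' k end).
split=> [[]//|eps u eps_ge0]; rewrite PE // QE //.
by split=> [[gP g'P] [k|k] //|gg]; split=> k; [exact: gg (inl k) | exact: gg (inr k)].
Qed.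

End AffineSystem.

Section NearZero.
Variable R : realType.

Lemma near_right_ex (x : R) (P : R -> Prop) :
  (\forall t \near x^'+, P t) -> exists2 t, x < t & P t.
Proof. by move=> /(filterI (nbhs_right_gt x))/filter_ex[t [xt Pt]]; exists t. Qed.

Lemma near_right0_mul_le (I : finType) (c g : I -> R) :
  \forall t \near 0^'+, forall i, 0 < g i -> t * c i <= g i.
Proof.
apply: filter_forall => i; have [g_gt0|_] := ltP 0 (g i); last exact: nearW.
have c1_gt0 : 0 < `|c i| + 1 by rewrite ltr_pwDr.
near=> t => _.
have t_gt0 : 0 < t by near: t; exact: nbhs_right_gt.
have : t <= g i / (`|c i| + 1) by near: t; apply: nbhs_right_le; rewrite divr_gt0.
rewrite ler_pdivlMr // => tg; apply: le_trans tg.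
by rewrite ler_pM2l // (le_trans (ler_norm (c i))) // lerDl.
Unshelve. all: by end_near. Qed.

Lemma pigeonhole_pos (I : finType) (Q : I -> R -> Prop) :
  (forall i eps eps', 0 < eps -> eps <= eps' -> Q i eps -> Q i eps') ->
  (forall eps, 0 < eps -> exists i, Q i eps) ->
  exists i, forall eps, 0 < eps -> Q i eps.
Proof.
move=> Qmono Qex; apply: contrapT => /forallNP noQ.
have : \forall eps \near 0^'+, forall i, ~ Q i eps.
  apply: filter_forall => i; have /existsNP[eps0 /not_implyP[eps0_gt0 nQ]] := noQ i.
  near=> eps => Qi; apply/nQ/(Qmono i eps) => //; near: eps.
    exact: nbhs_right_gt.
  exact: nbhs_right_le.
by move=> /near_right_ex[eps /Qex[i Qi] /(_ i)].
Unshelve. all: by end_near. Qed.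

End NearZero.

Lemma ereal_inf_lt_gap (R : realType) (T : Type) (f : T -> R) (A : set T) (t0 : T)
    (delta : R) : 0 < delta -> (forall t, A t -> f t0 + delta <= f t) ->
  (ereal_inf [set (f t)%:E | t in setT] < ereal_inf [set (f t)%:E | t in A])%E.
Proof.
move=> delta_gt0 gap.
apply: (@le_lt_trans _ _ (f t0)%:E); first by apply: ereal_inf_lbound; exists t0.
apply: (@lt_le_trans _ _ (f t0 + delta)%:E); first by rewrite lte_fin ltrDl.
by apply: le_ereal_inf_tmp => _ [t At <-]; rewrite lee_fin; exact: gap.
Qed.

Section Pieces.
Variables (R : realType) (Y : finType) (d n : nat).
Variables (a : Y -> 'I_n.+1 -> 'rV[R]_d) (b : Y -> 'I_n.+1 -> R).

Definition piece y i u := dot (a y i) u + b y i.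

Lemma affine_piece y i : affine (piece y i).
Proof. exact: affine_dot. Qed.

Lemma piece_shift y i u w t : piece y i (u + t *: w) = piece y i u + t * dot (a y i) w.
Proof. by rewrite /piece dotDr dotZr addrAC. Qed.

Variable L : 'rV[R]_d -> Y -> R.
Hypothesis piece_le : forall y i u, piece y i u <= L u y.
Hypothesis piece_attains : forall y u, exists i, piece y i u = L u y.

Definition active (eps : R) u : {set Y * 'I_n.+1} :=
  [set yi | L u yi.1 - eps <= piece yi.1 yi.2 u].

Definition selects (s : Y -> 'I_n.+1) u := forall y i, piece y i u <= piece y (s y) u.

Lemma active_mono eps eps' u : eps <= eps' -> active eps u \subset active eps' u.
Proof. by move=> le_eps; apply/fintype.subsetP => yi; rewrite !inE => ?; lra. Qed.

Lemma exists_selects u : exists s : {ffun Y -> 'I_n.+1}, selects s u.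
Proof.
have /fin_all_exists[s sP] := fun y => piece_attains y u.
by exists [ffun y => s y] => y i; rewrite ffunE sP.
Qed.

Lemma selects_L s u y : selects s u -> L u y = piece y (s y) u.
Proof.
move=> su; apply/eqP; rewrite eq_le piece_le andbT.
by have [i <-] := piece_attains y u.
Qed.

Lemma active_selects s u eps y i : selects s u ->
  ((y, i) \in active eps u) = (piece y (s y) u - piece y i u <= eps).
Proof. by move=> su; rewrite inE /= (selects_L y su); apply/idP/idP => ?; lra. Qed.

Lemma expect_selects p s u : selects s u ->
  expect p (L u) = \sum_y p y * piece y (s y) u.
Proof. by move=> su; apply: eq_bigr => y _; rewrite (selects_L y su). Qed.

Lemma affine_system_selects s :
  affine_system (fun eps u => forall y i, piece y i u - piece y (s y) u <= eps).
Proof.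
apply: affine_system_ext (affine_system_forall (fun yi : Y * 'I_n.+1 =>
  affineB (affine_piece yi.1 yi.2) (affine_piece yi.1 (s yi.1)))).
by move=> eps u _; split=> [gP y i|gP [y i]]; [exact: gP (y, i) | exact: gP].
Qed.

Lemma active_closed (S : {set Y * 'I_n.+1}) :
  (forall eps, 0 < eps -> exists u, S \subset active eps u) -> exists v, S \subset active 0 v.
Proof.
move=> feas; pose Q (s : {ffun Y -> 'I_n.+1}) eps :=
  exists u, selects s u /\ S \subset active eps u.
have [s sQ] : exists s, forall eps, 0 < eps -> Q s eps.
  apply: pigeonhole_pos => [s eps eps' _ le_eps [u [su Su]]|eps /feas[u Su]].
    by exists u; split=> //; apply: fintype.subset_trans Su (active_mono _ le_eps).
  by have [s su] := exists_selects u; exists s, u.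
pose P eps u := (forall y i, piece y i u - piece y (s y) u <= eps) /\
  (forall yi, yi \in S -> piece yi.1 (s yi.1) u - piece yi.1 yi.2 u <= eps).
have sysP : affine_system P.
  apply: affine_system_and; first exact: affine_system_selects.
  by apply: affine_system_forall_cond => yi; apply: affineB; exact: affine_piece.
have [|v [vs vS]] := affine_system_closed sysP.
  move=> eps /[dup] eps_gt0 /sQ[u [su Su]]; exists u; split=> [y i|[y i] yiS].
    by have := su y i; lra.
  by rewrite -(active_selects _ _ _ su) (fintype.subsetP Su).
have sv : selects s v by move=> y i; rewrite -subr_le0.
exists v; apply/fintype.subsetP => -[y i] yiS.
by rewrite (active_selects _ _ _ sv); exact: vS (y, i) yiS.
Qed.

Lemma active_thickening :
  exists2 e0, 0 < e0 & forall u, exists v, active e0 u \subset active 0 v.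
Proof.
have dichotomy (S : {set Y * 'I_n.+1}) : \forall eps \near 0^'+,
    (exists v, S \subset active 0 v) \/ (forall u, ~ S \subset active eps u).
  have [/active_closed Sv|] := pselect (forall eps, 0 < eps -> exists u, S \subset active eps u).
    by apply: nearW => eps; left.
  move=> /existsNP[eps0 /not_implyP[eps0_gt0 /forallNP noS]].
  near=> eps; right=> u Su; apply: (noS u); apply: fintype.subset_trans Su (active_mono _ _).
  by near: eps; exact: nbhs_right_le.
have [e0 e0_gt0 e0P] := near_right_ex (filter_forall _ dichotomy).
by exists e0 => // u; have [//|/(_ u)] := e0P (active e0 u); rewrite subxx.
Unshelve. all: by end_near. Qed.

Lemma L_convex y v u t : 0 <= t -> t <= 1 ->
  L (v + t *: (u - v)) y <= (1 - t) * L v y + t * L u y.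
Proof.
move=> t_ge0 t_le1; have [i <-] := piece_attains y (v + t *: (u - v)).
have := piece_le y i v; have := piece_le y i u.
rewrite piece_shift dotBr /piece; nra.
Qed.

Lemma L_increment_le x v w : active 0 x \subset active 0 v ->
  \forall t \near 0^'+, forall y, L (x + t *: w) y - L x y <= L (v + t *: w) y - L v y.
Proof.
move=> xv; apply: filter_forall => y.
have [i0 i0x] := piece_attains y x.
have rhs_ge j t : piece y j x = L x y -> t * dot (a y j) w <= L (v + t *: w) y - L v y.
  move=> jx; have /(fintype.subsetP xv) : (y, j) \in active 0 x by rewrite inE /= subr0 jx.
  rewrite inE /= subr0 => jv.
  by have := piece_le y j (v + t *: w); rewrite piece_shift; lra.
have small := near_right0_mul_le (fun j => dot (a y j) w - dot (a y i0) w)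
  (fun j => L x y - piece y j x).
apply: filterS small => t t_small; have [j <-] := piece_attains y (x + t *: w).
rewrite piece_shift; have [jx|jx] := ltP (piece y j x) (L x y).
  by have := t_small j; rewrite subr_gt0 => /(_ jx); have := rhs_ge i0 t i0x; lra.
have jx' : piece y j x = L x y by apply/eqP; rewrite eq_le piece_le.
by have := rhs_ge j t jx'; lra.
Qed.

Lemma optimal_of_active_sub (p : Y -> R) x v : (forall y, 0 <= p y) ->
  prop L p x -> active 0 x \subset active 0 v -> prop L p v.
Proof.
move=> p_ge0 xopt xv u.
have [t t_gt0 [t_le1 incr]] : exists2 t, 0 < t & t <= 1 /\ forall y,
    L (x + t *: (u - v)) y - L x y <= L (v + t *: (u - v)) y - L v y.
  exact/near_right_ex/(filterI (nbhs_right_le ltr01) (L_increment_le (u - v) xv)).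
have gain : 0 <= t * (expect p (L u) - expect p (L v)).
  apply: le_trans (_ : expect p (L (x + t *: (u - v))) - expect p (L x) <= _).
    by rewrite subr_ge0; exact: xopt.
  rewrite /expect -!sumrB mulr_sumr; apply: ler_sum => y _.
  rewrite -!mulrBr mulrCA; apply: (ler_wpM2l (p_ge0 y)).
  by have := incr y; have := L_convex y v u (ltW t_gt0) t_le1; lra.
by rewrite pmulr_rge0 // subr_ge0 in gain.
Qed.

Lemma near_optimal_closed (p : Y -> R) (B e : R) (S : {set Y * 'I_n.+1}) : 0 < e ->
  (forall delta, 0 < delta -> exists u, active e u \subset S /\ expect p (L u) <= B + delta) ->
  exists v, active 0 v \subset S /\ expect p (L v) <= B.
Proof.
move=> e_gt0 feas; pose Q (s : {ffun Y -> 'I_n.+1}) delta :=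
  exists u, [/\ selects s u, active e u \subset S & expect p (L u) <= B + delta].
have [s sQ] : exists s, forall delta, 0 < delta -> Q s delta.
  apply: pigeonhole_pos => [s delta delta' _ le_delta [u [su uS uB]]|delta /feas[u [uS uB]]].
    by exists u; split=> //; lra.
  by have [s su] := exists_selects u; exists s, u.
pose P eps u := (forall y i, piece y i u - piece y (s y) u <= eps) /\
  ((forall yi, yi \notin S -> piece yi.1 yi.2 u - piece yi.1 (s yi.1) u + e <= eps) /\
   \sum_y p y * piece y (s y) u - B <= eps).
have sysP : affine_system P.
  apply: affine_system_and; first exact: affine_system_selects.
  apply: affine_system_and.
    apply: affine_system_forall_cond => yi.
    by apply: affineD; [apply: affineB; exact: affine_piece | exact: affine_cst].
  apply: affine_system_le; apply: affineB; last exact: affine_cst.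
  by apply: affine_sum => y; apply: affineZ; exact: affine_piece.
have [|v [vs [vS vB]]] := affine_system_closed sysP.
  move=> eps /[dup] eps_gt0 /sQ[u [su uS uB]]; exists u; split=> [y i|].
    by have := su y i; lra.
  split=> [[y i] yiS|]; last by rewrite -(expect_selects _ su); lra.
  have : (y, i) \notin active e u by apply: contra yiS; exact: (fintype.subsetP uS).
  by rewrite (active_selects _ _ _ su) -ltNge /=; lra.
have sv : selects s v by move=> y i; rewrite -subr_le0.
exists v; split; last by rewrite (expect_selects _ sv); lra.
apply/fintype.subsetP => -[y i]; apply: contraLR => yiS.
by rewrite (active_selects _ _ _ sv) -ltNge; have := vS (y, i) yiS; rewrite /=; lra.
Qed.

Lemma near_optimal_link e0 (link : 'rV[R]_d -> 'rV[R]_d) (p : Y -> R) (B : R) :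
  0 < e0 -> (forall u, active e0 u \subset active 0 (link u)) ->
  (forall y, 0 <= p y) -> (forall u, B <= expect p (L u)) ->
  exists2 delta, 0 < delta & forall u, expect p (L u) <= B + delta -> prop L p (link u).
Proof.
move=> e0_gt0 linkP p_ge0 B_le; apply: contrapT => noDelta.
pose Q S delta := exists u,
  [/\ active e0 u = S, ~ prop L p (link u) & expect p (L u) <= B + delta].
have [S SQ] : exists S, forall delta, 0 < delta -> Q S delta.
  apply: pigeonhole_pos => [S delta delta' _ le_delta [u [uS nopt uB]]|delta delta_gt0].
    by exists u; split=> //; lra.
  apply: contrapT => /forallNP noS; apply: noDelta; exists delta => // u uB.
  by apply: contrapT => nopt; apply: (noS (active e0 u)); exists u.
have [|v [vS vB]] := @near_optimal_closed p B e0 S e0_gt0.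
  by move=> delta /SQ[u [uS _ uB]]; exists u; rewrite uS.
have [u [uS nopt _]] := SQ 1 ltr01; apply: nopt.
apply: optimal_of_active_sub p_ge0 (fun w => le_trans vB (B_le w)) _.
by rewrite (fintype.subset_trans vS) // -uS linkP.
Qed.

End Pieces.

Lemma polyhedral_pieces (R : realType) (Y : finType) (d : nat) (L : 'rV[R]_d -> Y -> R) :
  polyhedral L -> exists n (a : Y -> 'I_n.+1 -> 'rV[R]_d) (b : Y -> 'I_n.+1 -> R),
    (forall y i u, piece a b y i u <= L u y) /\
    (forall y u, exists i, piece a b y i u = L u y).
Proof.
move=> Lpoly.
have pieces_y y : exists mab : nat * (nat -> 'rV[R]_d) * (nat -> R),
    (forall k u, dot (mab.1.2 k) u + mab.2 k <= L u y) /\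
    (forall u, exists2 k, (k <= mab.1.1)%N & dot (mab.1.2 k) u + mab.2 k = L u y).
  have [m [a [b Lab]]] := Lpoly y.
  (* out-of-range indices are mapped by [inord] to the first piece *)
  exists (m, fun k => a (inord k), fun k => b (inord k)); split=> [k u|u] /=.
    by rewrite Lab; exact: le_bigmax.
  rewrite Lab; have [i ->] := bigmax_attained ord0 (fun i => affine_eval (a i) (b i) u).
  by exists i; rewrite ?inord_val // -ltnS.
have [f fP] := choice pieces_y.
exists (\max_y (f y).1.1)%N, (fun y k => (f y).1.2 k), (fun y k => (f y).2 k).
split=> [y i u|y u]; first exact: (fP y).1.
have [k km <-] := (fP y).2 u.
have kn : (k < (\max_y (f y).1.1).+1)%N.
  by rewrite ltnS (leq_trans km) // (leq_bigmax_cond (F := fun y => (f y).1.1)).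
by exists (Ordinal kn).
Qed.

Theorem theorem8 (R : realType) (Y Rep : finType) (d : nat)
    (L : 'rV[R]_d -> Y -> R) (gamma : (Y -> R) -> Rep -> Prop) :
  nonneg_loss L -> polyhedral L ->
  is_property gamma -> indirectly_elicits L gamma ->
  forall ell : Rep -> Y -> R, nonneg_loss ell -> elicits ell gamma ->
  exists psi : 'rV[R]_d -> Rep, calibrated L psi ell.
Proof.
move=> _ /polyhedral_pieces[n [a [b [piece_le piece_attains]]]] _ [[Lmin _] Lind].
move=> ell _ [_ ellP].
have [e0 e0_gt0 /choice[link linkP]] := active_thickening piece_le piece_attains.
have [rep repP] := choice Lind.
exists (fun u => rep (link u)) => p p_simplex; have [p_ge0 _] := p_simplex.
have [u0 u0opt] := Lmin p p_simplex.
have [delta delta_gt0 linkopt] :=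
  near_optimal_link piece_le piece_attains e0_gt0 linkP p_ge0 u0opt.
apply: (ereal_inf_lt_gap (t0 := u0) delta_gt0) => u /= bad.
rewrite leNgt; apply/negP => /ltW/linkopt/(repP _ p p_simplex)/(ellP _ p_simplex).
exact: bad.
Qed.
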